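(* Let $B$ be a brace such that $B=\operatorname{Soc}_n(B)$ for some $n\in\mathbb{N}$. If the group $(B,\cdot)$ is supersoluble, then $B$ is supersoluble.
   Context: A brace (skew left brace) is a set $B$ with two binary operations $+$ and $\cdot$ such that $(B,+)$ and $(B,\cdot)$ are groups and $a(b+c)=ab-a+ac$ for all $a,b,c\in B$. $\lambda_a(b)=-a+ab$ defines a homomorphism $\lambda\colon(B,\cdot)\to\operatorname{Aut}(B,+)$. An ideal is a subset that is a subgroup of both groups, normal in both, and invariant under all $\lambda_b$; quotients by ideals are braces. $\operatorname{Soc}(B)=\operatorname{Ker}\lambda\cap Z(B,+)$; $\operatorname{Soc}_0(B)=\{0\}$, $\operatorname{Soc}_{k+1}(B)/\operatorname{Soc}_k(B)=\operatorname{Soc}(B/\operatorname{Soc}_k(B))$. A brace $B$ is supersoluble if there is a finite chain of ideals $\{0\}=I_0\le\dots\le I_m=B$ such that for each $i$, either $(I_{i+1}/I_i,+)$ is infinite cyclic and $I_{i+1}/I_i\le\operatorname{Soc}(B/I_i)$, or $I_{i+1}/I_i$ has prime order. A group is supersoluble in the usual sense (finite normal series with cyclic factors). *)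

(* skew left braces over an arbitrary (possibly infinite) carrier. *)
From Stdlib Require Import ZArith Znumtheory.

Record brace := Brace {
  carrier :> Type;
  add : carrier -> carrier -> carrier;
  opp : carrier -> carrier;
  zero : carrier;
  mul : carrier -> carrier -> carrier;
  inv : carrier -> carrier;
  one : carrier;
  addA : forall a b c, add a (add b c) = add (add a b) c;
  add0l : forall a, add zero a = a;
  add0r : forall a, add a zero = a;
  addNl : forall a, add (opp a) a = zero;
  addNr : forall a, add a (opp a) = zero;
  mulA : forall a b c, mul a (mul b c) = mul (mul a b) c;
  mul1l : forall a, mul one a = a;
  mul1r : forall a, mul a one = a;
  mulVl : forall a, mul (inv a) a = one;
  mulVr : forall a, mul a (inv a) = one;
  brace_comp : forall a b c,
    mul a (add b c) = add (add (mul a b) (opp a)) (mul a c)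
}.

Arguments add {_}. Arguments opp {_}. Arguments zero {_}.
Arguments mul {_}. Arguments inv {_}. Arguments one {_}.

Section Defs.
Variable B : brace.

Definition lam (a b : B) : B := add (opp a) (mul a b).

Definition zmul (g : B) (k : Z) : B :=
  match k with
  | Z0 => zero
  | Zpos p => Nat.iter (Pos.to_nat p) (fun y => add g y) zero
  | Zneg p => opp (Nat.iter (Pos.to_nat p) (fun y => add g y) zero)
  end.

Definition zpow (g : B) (k : Z) : B :=
  match k with
  | Z0 => one
  | Zpos p => Nat.iter (Pos.to_nat p) (fun y => mul g y) one
  | Zneg p => inv (Nat.iter (Pos.to_nat p) (fun y => mul g y) one)
  end.

Definition subset_of := B -> Prop.

Definition is_add_subgroup (I : subset_of) : Prop :=
  I zero /\ (forall x y, I x -> I y -> I (add x y)) /\ (forall x, I x -> I (opp x)).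

Definition is_mul_subgroup (I : subset_of) : Prop :=
  I one /\ (forall x y, I x -> I y -> I (mul x y)) /\ (forall x, I x -> I (inv x)).

Definition add_normal (I : subset_of) : Prop :=
  forall a x, I x -> I (add (add a x) (opp a)).

Definition mul_normal (I : subset_of) : Prop :=
  forall a x, I x -> I (mul (mul a x) (inv a)).

Definition lam_invariant (I : subset_of) : Prop :=
  forall b x, I x -> I (lam b x).

Definition is_ideal (I : subset_of) : Prop :=
  is_add_subgroup I /\ is_mul_subgroup I /\ add_normal I /\ mul_normal I /\
  lam_invariant I.

(* For an ideal I, the image of x in B/I lies in Soc(B/I) = Ker lambda ∩ Z(B/I,+):
   lambda_{x+I}(y+I) = y+I for all y, and x+I is central in (B/I,+). *)
Definition in_soc_mod (I : subset_of) (x : B) : Prop :=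
  (forall y, I (add (opp y) (lam x y))) /\
  (forall y, I (add (add (add x y) (opp x)) (opp y))).

Fixpoint soc_n (k : nat) : subset_of :=
  match k with
  | O => fun x => x = zero
  | S k' => in_soc_mod (soc_n k')
  end.

Definition add_factor_infinite_cyclic (I J : subset_of) : Prop :=
  exists g, J g /\
    (forall x, J x -> exists k : Z, I (add (opp (zmul g k)) x)) /\
    (forall k : Z, I (zmul g k) -> k = 0%Z).

Definition factor_prime_order (I J : subset_of) : Prop :=
  exists (p : nat) (f : nat -> B),
    prime (Z.of_nat p) /\
    (forall j, (j < p)%nat -> J (f j)) /\
    (forall j k, (j < p)%nat -> (k < p)%nat -> I (add (opp (f j)) (f k)) -> j = k) /\
    (forall x, J x -> exists j, (j < p)%nat /\ I (add (opp (f j)) x)).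

Definition brace_supersoluble : Prop :=
  exists (m : nat) (I : nat -> subset_of),
    (forall x, I O x <-> x = zero) /\
    (forall x, I m x) /\
    (forall i, (i <= m)%nat -> is_ideal (I i)) /\
    (forall i x, (i < m)%nat -> I i x -> I (S i) x) /\
    (forall i, (i < m)%nat ->
       (add_factor_infinite_cyclic (I i) (I (S i)) /\
        (forall x, I (S i) x -> in_soc_mod (I i) x))
       \/ factor_prime_order (I i) (I (S i))).

Definition mul_group_supersoluble : Prop :=
  exists (m : nat) (N : nat -> subset_of),
    (forall x, N O x <-> x = one) /\
    (forall x, N m x) /\
    (forall i, (i <= m)%nat -> is_mul_subgroup (N i) /\ mul_normal (N i)) /\
    (forall i x, (i < m)%nat -> N i x -> N (S i) x) /\
    (forall i, (i < m)%nat ->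
       exists g, N (S i) g /\
         forall x, N (S i) x -> exists k : Z, N i (mul (inv (zpow g k)) x)).

End Defs.

(* It suffices to refine every socle layer I = Soc_k(B) ⊆ J = Soc_{k+1}(B) by a
   chain of ideals with supersoluble factors.  Modulo I, on J the product agrees with the sum,
   the inverse with the opposite, conjugation with λ and powers with multiples; hence every
   additive subgroup between I and J that is λ-stable is an ideal.  Intersecting with a normal
   series (N_j) of (B,·) with cyclic factors gives the ideals J ∩ N_j I, and the image of
   J ∩ N_{j+1} in the cyclic group N_{j+1}/N_j is generated by a single element h; so each
   step is an ideal I' + ⟨h⟩ over I'.  If h has infinite order modulo I', this is an infinite
   cyclic socle factor; if it has order d > 1, a prime p ∣ d gives the intermediate ideal
   I' + ⟨p h⟩, of index p, and we conclude by induction on d. *)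

From Stdlib Require Import ZArith Znumtheory Lia Setoid Morphisms.
From Stdlib Require Import Classical FunctionalExtensionality PropExtensionality.

Local Open Scope Z_scope.

Lemma Z_least_positive (P : Z -> Prop) (a : Z) : (0 < a) -> P a ->
  exists d, (0 < d) /\ P d /\ forall c, (0 < c) -> P c -> (d <= c).
Proof.
  induction a as [a IH] using (well_founded_ind (Z.lt_wf 0)). intros Ha Pa.
  destruct (classic (exists c, (0 < c < a) /\ P c)) as [[c [Hc Pc]] | Hmin].
  - apply (IH c); [lia | lia | exact Pc].
  - exists a. split; [exact Ha | split; [exact Pa |]].
    intros c Hc Pc. apply Z.nlt_ge. intro Hca. apply Hmin. exists c. split; [lia | exact Pc].
Qed.

Lemma Z_subgroup_multiples (S : Z -> Prop) :
  S 0 -> (forall a b, S a -> S b -> S (a + b)) -> (forall a, S a -> S (- a)) ->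
  exists d, (0 <= d) /\ forall a, S a <-> (d | a).
Proof.
  intros S0 SD SN.
  assert (SM : forall a q, S a -> S (q * a)).
  { intros a q Ha. induction q using Z.peano_ind.
    - exact S0.
    - rewrite Z.mul_succ_l. auto.
    - rewrite Z.mul_pred_l. unfold Z.sub. auto. }
  destruct (classic (exists a, (0 < a) /\ S a)) as [[a [Ha Sa]] | Hnone].
  - destruct (Z_least_positive S a Ha Sa) as (d & Hd & Sd & Hmin).
    exists d. split; [lia |]. intro b. split.
    + intro Sb. apply Z.mod_divide; [lia |].
      assert (Sr : S (b mod d)).
      { rewrite Z.mod_eq by lia. unfold Z.sub. rewrite <- Z.mul_opp_r, Z.mul_comm. auto. }
      pose proof (Z.mod_pos_bound b d Hd).
      destruct (Z.eq_dec (b mod d) 0) as [E | E]; [exact E |].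
      specialize (Hmin (b mod d) ltac:(lia) Sr). lia.
    + intros [q ->]. auto.
  - exists 0. split; [lia |]. intro b. split.
    + intro Sb. replace b with 0; [apply Z.divide_0_r |].
      destruct (Z.lt_trichotomy b 0) as [Hb | [Hb | Hb]]; [| auto |];
        exfalso; apply Hnone; [exists (- b) | exists b]; split; auto; lia.
    + intro H. apply Z.divide_0_l in H. subst. exact S0.
Qed.

Lemma Z_prime_divisor (d : Z) : (1 < d) -> exists p, prime p /\ (p | d).
Proof.
  induction d as [d IH] using (well_founded_ind (Z.lt_wf 0)). intro Hd.
  destruct (prime_dec d) as [Hp | Hnp].
  - exists d. split; [exact Hp | apply Z.divide_refl].
  - destruct (not_prime_divide d Hd Hnp) as [c [Hc Hcd]].
    destruct (IH c ltac:(lia) ltac:(lia)) as [p [Hp Hpc]].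
    exists p. split; [exact Hp | exact (Z.divide_trans _ _ _ Hpc Hcd)].
Qed.

Record is_group {T : Type} (op : T -> T -> T) (iv : T -> T) (e : T) : Prop := IsGroup {
  opA : forall a b c, op a (op b c) = op (op a b) c;
  op1g : forall a, op e a = a;
  opg1 : forall a, op a e = a;
  opVg : forall a, op (iv a) a = e;
  opgV : forall a, op a (iv a) = e }.
Arguments opA {T op iv e}. Arguments op1g {T op iv e}. Arguments opg1 {T op iv e}.
Arguments opVg {T op iv e}. Arguments opgV {T op iv e}.

Definition subgroup {T} (op : T -> T -> T) (iv : T -> T) (e : T) (S : T -> Prop) : Prop :=
  S e /\ (forall x y, S x -> S y -> S (op x y)) /\ (forall x, S x -> S (iv x)).

Definition normal {T} (op : T -> T -> T) (iv : T -> T) (S : T -> Prop) : Prop :=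
  forall a x, S x -> S (op (op a x) (iv a)).

Definition cong {T} (op : T -> T -> T) (iv : T -> T) (N : T -> Prop) (a b : T) : Prop :=
  N (op (iv a) b).

(* Unfolds exactly as [zmul] and [zpow] do, so both are instances of [gpow] by conversion. *)
Definition gpow {T} (op : T -> T -> T) (iv : T -> T) (e : T) (g : T) (k : Z) : T :=
  match k with
  | Z0 => e
  | Zpos p => Nat.iter (Pos.to_nat p) (fun y => op g y) e
  | Zneg p => iv (Nat.iter (Pos.to_nat p) (fun y => op g y) e)
  end.

Section Group.
Context {T : Type} {op : T -> T -> T} {iv : T -> T} {e : T} (G : is_group op iv e).
Local Notation pow := (gpow op iv e).

Lemma opKg a b : op (iv a) (op a b) = b.
Proof. rewrite (opA G), (opVg G), (op1g G). reflexivity. Qed.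

Lemma opKVg a b : op a (op (iv a) b) = b.
Proof. rewrite (opA G), (opgV G), (op1g G). reflexivity. Qed.

Lemma opgK a b : op (op b a) (iv a) = b.
Proof. rewrite <- (opA G), (opgV G), (opg1 G). reflexivity. Qed.

Lemma opgKV a b : op (op b (iv a)) a = b.
Proof. rewrite <- (opA G), (opVg G), (opg1 G). reflexivity. Qed.

Lemma inv_unique a b : op a b = e -> iv a = b.
Proof. intro H. rewrite <- (opg1 G (iv a)), <- H, opKg. reflexivity. Qed.

Lemma invgK a : iv (iv a) = a.
Proof. apply inv_unique, (opVg G). Qed.

Lemma invg1 : iv e = e.
Proof. apply inv_unique, (op1g G). Qed.

Lemma invgM a b : iv (op a b) = op (iv b) (iv a).
Proof. apply inv_unique. rewrite (opA G), opgK, (opgV G). reflexivity. Qed.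

Lemma iter_op_comm g n :
  op g (Nat.iter n (fun y => op g y) e) = op (Nat.iter n (fun y => op g y) e) g.
Proof.
  induction n as [| n IH]; simpl.
  - rewrite (op1g G), (opg1 G). reflexivity.
  - rewrite IH at 1. apply (opA G).
Qed.

Lemma gpow_of_nat g n : pow g (Z.of_nat n) = Nat.iter n (fun y => op g y) e.
Proof. destruct n; simpl; [| rewrite SuccNat2Pos.id_succ]; reflexivity. Qed.

Lemma gpow_opp_of_nat g n : pow g (- Z.of_nat n) = iv (Nat.iter n (fun y => op g y) e).
Proof. destruct n; simpl; [rewrite invg1 | rewrite SuccNat2Pos.id_succ]; reflexivity. Qed.

Lemma gpow_succ g k : pow g (Z.succ k) = op (pow g k) g.
Proof.
  destruct (Z.le_ge_cases 0 k) as [Hk | Hk].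
  - rewrite <- (Z2Nat.id k Hk), <- Nat2Z.inj_succ, !gpow_of_nat. apply iter_op_comm.
  - replace k with (- Z.of_nat (Z.to_nat (- k))) by lia.
    destruct (Z.to_nat (- k)) as [| n].
    + simpl. rewrite (op1g G), (opg1 G). reflexivity.
    + replace (Z.succ (- Z.of_nat (S n))) with (- Z.of_nat n) by lia.
      rewrite !gpow_opp_of_nat. simpl. rewrite invgM, opgKV. reflexivity.
Qed.

Lemma gpow_pred g k : pow g (Z.pred k) = op (pow g k) (iv g).
Proof. rewrite <- (Z.succ_pred k) at 2. rewrite gpow_succ, opgK. reflexivity. Qed.

Lemma gpow1 g : pow g 1 = g.
Proof. apply (opg1 G). Qed.

Lemma gpow_add g a b : pow g (a + b) = op (pow g a) (pow g b).
Proof.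
  induction b as [| b IH | b IH] using Z.peano_ind.
  - rewrite Z.add_0_r, (opg1 G). reflexivity.
  - rewrite Z.add_succ_r, !gpow_succ, IH, (opA G). reflexivity.
  - rewrite Z.add_pred_r, !gpow_pred, IH, (opA G). reflexivity.
Qed.

Lemma gpow_opp g k : pow g (- k) = iv (pow g k).
Proof.
  symmetry. apply inv_unique. rewrite <- gpow_add, Z.add_opp_diag_r. reflexivity.
Qed.

Lemma gpow_mul g a b : pow g (a * b) = pow (pow g a) b.
Proof.
  induction b as [| b IH | b IH] using Z.peano_ind.
  - rewrite Z.mul_0_r. reflexivity.
  - rewrite Z.mul_succ_r, gpow_add, gpow_succ, IH. reflexivity.
  - rewrite Z.mul_pred_r, gpow_pred, <- IH, <- gpow_opp, <- gpow_add. reflexivity.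
Qed.

Lemma subgroup_gpow S g k : subgroup op iv e S -> S g -> S (pow g k).
Proof.
  intros [S1 [SM SV]] Sg. induction k as [| k IH | k IH] using Z.peano_ind.
  - exact S1.
  - rewrite gpow_succ. auto.
  - rewrite gpow_pred. auto.
Qed.

Section Congruence.
Variable N : T -> Prop.
Hypothesis N_subgroup : subgroup op iv e N.
Hypothesis N_normal : normal op iv N.
Local Notation "a ≡ b" := (cong op iv N a b) (at level 70).

Lemma cong_refl a : a ≡ a.
Proof. unfold cong. rewrite (opVg G). apply N_subgroup. Qed.

Lemma cong_sym a b : a ≡ b -> b ≡ a.
Proof. unfold cong. intro H. apply N_subgroup in H. rewrite invgM, invgK in H. exact H. Qed.

Lemma cong_trans a b c : a ≡ b -> b ≡ c -> a ≡ c.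
Proof.
  unfold cong. intros Hab Hbc. pose proof (proj1 (proj2 N_subgroup) _ _ Hab Hbc) as H.
  rewrite <- (opA G), opKVg in H. exact H.
Qed.

Lemma normal_conjV a x : N x -> N (op (op (iv a) x) a).
Proof. intro H. pose proof (N_normal (iv a) x H) as H'. rewrite invgK in H'. exact H'. Qed.

Lemma cong_op a a' b b' : a ≡ a' -> b ≡ b' -> op a b ≡ op a' b'.
Proof.
  unfold cong. intros Ha Hb.
  replace (op (iv (op a b)) (op a' b')) with (op (op (op (iv b) (op (iv a) a')) b) (op (iv b) b')).
  - apply N_subgroup; [apply normal_conjV |]; assumption.
  - rewrite invgM, <- (opA G _ b), opKVg, !(opA G). reflexivity.
Qed.

Lemma cong_iv a a' : a ≡ a' -> iv a ≡ iv a'.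
Proof.
  unfold cong. intro H. apply cong_sym in H. apply (N_normal a) in H.
  rewrite (opA G), opgK in H. rewrite invgK. exact H.
Qed.

Lemma cong_gpow a a' k : a ≡ a' -> pow a k ≡ pow a' k.
Proof.
  intro H. induction k as [| k IH | k IH] using Z.peano_ind.
  - apply cong_refl.
  - rewrite !gpow_succ. apply cong_op; assumption.
  - rewrite !gpow_pred. apply cong_op; [| apply cong_iv]; assumption.
Qed.

Lemma cyclic_quotient_exponents (H : T -> Prop) (g : T) :
  subgroup op iv e H -> exists d, forall k, (exists w, N w /\ H (op (pow g k) w)) <-> (d | k).
Proof.
  intros [H1 [HM HV]].
  destruct (Z_subgroup_multiples (fun k => exists w, N w /\ H (op (pow g k) w)))
    as [d [_ Hd]]; [| | | exists d; exact Hd].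
  - exists e. split; [apply N_subgroup |]. rewrite (opg1 G). exact H1.
  - intros k1 k2 [w1 [Nw1 Hw1]] [w2 [Nw2 Hw2]].
    exists (op (op (op (iv (pow g k2)) w1) (pow g k2)) w2). split.
    + apply N_subgroup; [apply normal_conjV |]; assumption.
    + replace (op (pow g (k1 + k2)) _) with (op (op (pow g k1) w1) (op (pow g k2) w2)).
      * apply HM; assumption.
      * rewrite gpow_add, !(opA G), opgK. reflexivity.
  - intros k [w [Nw Hw]].
    exists (op (op (pow g k) (iv w)) (iv (pow g k))). split.
    + apply N_normal, N_subgroup, Nw.
    + replace (op (pow g (- k)) _) with (iv (op (pow g k) w)).
      * apply HV, Hw.
      * rewrite gpow_opp, invgM, !(opA G), (opVg G), (op1g G). reflexivity.
Qed.

Lemma subgroup_of_cyclic_quotient (M H : T -> Prop) (g : T) :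
  subgroup op iv e M -> subgroup op iv e H -> (forall x, N x -> M x) -> M g ->
  (forall u, M u -> exists k, N (op (iv (pow g k)) u)) ->
  exists h, H h /\ M h /\ forall u, H u -> M u -> exists t, N (op (iv (pow h t)) u).
Proof.
  intros M_subgroup H_subgroup NM Mg Mgen.
  destruct (cyclic_quotient_exponents H g H_subgroup) as [d Hd].
  destruct (proj2 (Hd d) (Z.divide_refl d)) as [w [Nw Hw]].
  exists (op (pow g d) w). split; [exact Hw | split].
  - apply M_subgroup; [apply subgroup_gpow | apply NM]; assumption.
  - intros u Hu Mu. destruct (Mgen u Mu) as [k Nk].
    destruct (proj1 (Hd k)) as [t Ht].
    { exists (op (iv (pow g k)) u). split; [exact Nk |]. rewrite opKVg. exact Hu. }
    exists t.
    assert (Hh : op (pow g d) w ≡ pow g d).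
    { unfold cong. rewrite invgM, opgKV. apply N_subgroup, Nw. }
    apply (cong_gpow _ _ t) in Hh.
    rewrite <- gpow_mul, Z.mul_comm, <- Ht in Hh.
    exact (cong_trans _ _ _ Hh Nk).
Qed.

End Congruence.
End Group.

Lemma gpow_morph {T T'} {op : T -> T -> T} {iv : T -> T} {e : T}
  {op' : T' -> T' -> T'} {iv' : T' -> T'} {e' : T'} (f : T -> T') :
  (forall a b, f (op a b) = op' (f a) (f b)) -> (forall a, f (iv a) = iv' (f a)) -> f e = e' ->
  forall g k, f (gpow op iv e g k) = gpow op' iv' e' (f g) k.
Proof.
  intros f_op f_iv f_e g [| p | p]; simpl; [exact f_e | | rewrite f_iv; f_equal];
    induction (Pos.to_nat p) as [| n IH]; simpl; [exact f_e | rewrite f_op, IH | exact f_e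
    | rewrite f_op, IH]; reflexivity.
Qed.

Existing Class is_ideal.

Section Brace.
Variable B : brace.
Implicit Types a b c g x y : B.

Let AG : is_group (@add B) opp zero :=
  {| opA := addA B; op1g := add0l B; opg1 := add0r B; opVg := addNl B; opgV := addNr B |}.
Let MG : is_group (@mul B) inv one :=
  {| opA := mulA B; op1g := mul1l B; opg1 := mul1r B; opVg := mulVl B; opgV := mulVr B |}.

Lemma mulr0 a : mul a zero = a.
Proof.
  pose proof (brace_comp B a zero zero) as E. rewrite (add0l B), <- (addA B) in E.
  apply (f_equal (add (opp (mul a zero)))) in E. rewrite (opVg AG), (opKg AG) in E.
  rewrite <- (opKVg AG a (mul a zero)), <- E. apply (add0r B).
Qed.

Lemma one_zero : @one B = zero.
Proof. rewrite <- (mulr0 one). apply (mul1l B). Qed.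

Lemma mul_lam a b : mul a b = add a (lam B a b).
Proof. unfold lam. rewrite (opKVg AG). reflexivity. Qed.

Lemma lam_add a b c : lam B a (add b c) = add (lam B a b) (lam B a c).
Proof. unfold lam. rewrite (brace_comp B), !(addA B). reflexivity. Qed.

Lemma lam_zero a : lam B a zero = zero.
Proof. unfold lam. rewrite mulr0. apply (addNl B). Qed.

Lemma lam_opp a b : lam B a (opp b) = opp (lam B a b).
Proof. symmetry. apply (inv_unique AG). rewrite <- lam_add, (addNr B). apply lam_zero. Qed.

Lemma lam_mul a b c : lam B (mul a b) c = lam B a (lam B b c).
Proof.
  assert (E : mul a (opp b) = add (add a (opp (mul a b))) a).
  { pose proof (brace_comp B a b (opp b)) as E. rewrite (addNr B), mulr0 in E.
    rewrite <- (opKg AG (add (mul a b) (opp a)) (mul a (opp b))), <- E.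
    rewrite (invgM AG), (invgK AG). reflexivity. }
  unfold lam at 3. rewrite lam_add. unfold lam.
  rewrite E, (mulA B), !(addA B), (addNl B), (add0l B), (opgK AG). reflexivity.
Qed.

Lemma lam_one c : lam B one c = c.
Proof. unfold lam. rewrite (mul1l B), one_zero, (invg1 AG), (add0l B). reflexivity. Qed.

Lemma lamVK a c : lam B (inv a) (lam B a c) = c.
Proof. rewrite <- lam_mul, (mulVl B). apply lam_one. Qed.

Lemma lamKV a c : lam B a (lam B (inv a) c) = c.
Proof. rewrite <- lam_mul, (mulVr B). apply lam_one. Qed.

Lemma zmul_add g k l : zmul B g (k + l) = add (zmul B g k) (zmul B g l).
Proof. exact (gpow_add AG g k l). Qed.

Lemma zmul_opp g k : zmul B g (- k) = opp (zmul B g k).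
Proof. exact (gpow_opp AG g k). Qed.

Lemma zmul_mul g k l : zmul B g (k * l) = zmul B (zmul B g k) l.
Proof. exact (gpow_mul AG g k l). Qed.

Lemma zmul1 g : zmul B g 1 = g.
Proof. exact (gpow1 AG g). Qed.

Lemma zpow_add g k l : zpow B g (k + l) = mul (zpow B g k) (zpow B g l).
Proof. exact (gpow_add MG g k l). Qed.

Lemma zpow_opp g k : zpow B g (- k) = inv (zpow B g k).
Proof. exact (gpow_opp MG g k). Qed.

Lemma zpow1 g : zpow B g 1 = g.
Proof. exact (gpow1 MG g). Qed.

Lemma lam_zmul b g k : lam B b (zmul B g k) = zmul B (lam B b g) k.
Proof. exact (gpow_morph (lam B b) (lam_add b) (lam_opp b) (lam_zero b) g k). Qed.

Section Ideal.
Variable I : subset_of B.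
Context {HI : is_ideal B I}.

Lemma ideal_add_subgroup : subgroup add opp zero I.
Proof. apply HI. Qed.

Lemma ideal_add_normal : normal add opp I.
Proof. apply HI. Qed.

Lemma ideal_mul_subgroup : subgroup mul inv one I.
Proof. apply HI. Qed.

Lemma ideal_mul_normal : normal mul inv I.
Proof. apply HI. Qed.

Lemma ideal0 : I zero.
Proof. apply ideal_add_subgroup. Qed.

Lemma ideal_add x y : I x -> I y -> I (add x y).
Proof. apply ideal_add_subgroup. Qed.

Lemma ideal_opp x : I x -> I (opp x).
Proof. apply ideal_add_subgroup. Qed.

Lemma ideal_mul x y : I x -> I y -> I (mul x y).
Proof. apply ideal_mul_subgroup. Qed.

Lemma ideal_inv x : I x -> I (inv x).
Proof. apply ideal_mul_subgroup. Qed.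

Lemma ideal_lam b x : I x -> I (lam B b x).
Proof. apply HI. Qed.

Lemma ideal_zmul g k : I g -> I (zmul B g k).
Proof. apply (subgroup_gpow AG), ideal_add_subgroup. Qed.

Lemma ideal_zpow g k : I g -> I (zpow B g k).
Proof. apply (subgroup_gpow MG), ideal_mul_subgroup. Qed.

Definition eqv : B -> B -> Prop := cong add opp I.

#[global] Instance eqv_equiv : Equivalence eqv.
Proof.
  split.
  - intro a. apply (cong_refl AG), ideal_add_subgroup.
  - intros a b. apply (cong_sym AG), ideal_add_subgroup.
  - intros a b c. apply (cong_trans AG), ideal_add_subgroup.
Qed.

Lemma eqv_mul_cong a b : eqv a b <-> cong mul inv I a b.
Proof.
  unfold eqv, cong.
  replace (add (opp a) b) with (lam B a (mul (inv a) b))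
    by (unfold lam; rewrite (opKVg MG); reflexivity).
  split; intro H.
  - apply (ideal_lam (inv a)) in H. rewrite lamVK in H. exact H.
  - apply ideal_lam, H.
Qed.

#[global] Instance add_proper : Proper (eqv ==> eqv ==> eqv) (@add B).
Proof.
  intros a a' Ha b b' Hb. apply (cong_op AG); auto using ideal_add_subgroup, ideal_add_normal.
Qed.

#[global] Instance opp_proper : Proper (eqv ==> eqv) (@opp B).
Proof. intros a a' Ha. apply (cong_iv AG); auto using ideal_add_subgroup, ideal_add_normal. Qed.

#[global] Instance zmul_proper : Proper (eqv ==> eq ==> eqv) (zmul B).
Proof.
  intros a a' Ha k _ <-. apply (cong_gpow AG); auto using ideal_add_subgroup, ideal_add_normal.
Qed.

#[global] Instance mul_proper : Proper (eqv ==> eqv ==> eqv) (@mul B).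
Proof.
  intros a a' Ha b b' Hb. apply eqv_mul_cong in Ha, Hb. apply eqv_mul_cong.
  apply (cong_op MG); auto using ideal_mul_subgroup, ideal_mul_normal.
Qed.

#[global] Instance inv_proper : Proper (eqv ==> eqv) (@inv B).
Proof.
  intros a a' Ha. apply eqv_mul_cong in Ha. apply eqv_mul_cong.
  apply (cong_iv MG); auto using ideal_mul_subgroup, ideal_mul_normal.
Qed.

#[global] Instance lam_proper : Proper (eqv ==> eqv ==> eqv) (lam B).
Proof. intros a a' Ha b b' Hb. unfold lam. rewrite Ha, Hb. reflexivity. Qed.

#[global] Instance ideal_proper : Proper (eqv ==> iff) I.
Proof.
  enough (H : forall x y, eqv x y -> I x -> I y).
  { intros x y E. split; apply H; [exact E | symmetry; exact E]. }
  intros x y E Ix. rewrite <- (opKVg AG x y). apply ideal_add; assumption.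
Qed.

Lemma eqv_zero_l x : eqv zero x <-> I x.
Proof. unfold eqv, cong. rewrite (invg1 AG), (add0l B). reflexivity. Qed.

Lemma eqv_sub a b : eqv a b <-> I (add a (opp b)).
Proof.
  unfold eqv, cong. split; intro H.
  - apply ideal_opp in H. rewrite (invgM AG), (invgK AG) in H.
    apply (ideal_add_normal b) in H. rewrite (opKVg AG) in H. exact H.
  - apply (ideal_add_normal (opp a)) in H. rewrite (opKg AG), (invgK AG) in H.
    apply ideal_opp in H. rewrite (invgM AG), (invgK AG) in H. exact H.
Qed.

End Ideal.

Lemma subset_ext (S S' : subset_of B) : (forall x, S x <-> S' x) -> S = S'.
Proof.
  intro H. apply functional_extensionality. intro x. apply propositional_extensionality, H.
Qed.

Lemma eqv_mono (I J : subset_of B) :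
  (forall x, I x -> J x) -> forall a b, eqv I a b -> eqv J a b.
Proof. intros IJ a b. apply IJ. Qed.

Lemma ideal_eqv_closed (I J : subset_of B) {HJ : is_ideal B J} :
  (forall x, I x -> J x) -> forall x y, eqv I x y -> J x -> J y.
Proof.
  intros IJ x y Hxy Jx. rewrite <- (opKVg AG x y).
  apply (ideal_add J); [exact Jx | apply IJ, Hxy].
Qed.

Section Socle.
Variable I : subset_of B.
Context {HI : is_ideal B I}.
Local Notation soc := (in_soc_mod B I).

Lemma in_soc_modP x :
  soc x <-> (forall y, eqv I (lam B x y) y) /\ (forall y, eqv I (add x y) (add y x)).
Proof.
  assert (Ecomm : forall y,
    I (add (add (add x y) (opp x)) (opp y)) <-> eqv I (add x y) (add y x)).
  { intro y. rewrite (eqv_sub I), (invgM AG), (opA AG). reflexivity. }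
  unfold in_soc_mod. split; intros [Hlam Hcomm]; split; intro y.
  - symmetry. apply Hlam.
  - apply Ecomm, Hcomm.
  - change (eqv I y (lam B x y)). symmetry. apply Hlam.
  - apply Ecomm, Hcomm.
Qed.

Lemma soc_lam x y : soc x -> eqv I (lam B x y) y.
Proof. intro H. apply in_soc_modP, H. Qed.

Lemma soc_comm x y : soc x -> eqv I (add x y) (add y x).
Proof. intro H. apply in_soc_modP, H. Qed.

Lemma soc_mul x y : soc x -> eqv I (mul x y) (add x y).
Proof. intro H. rewrite mul_lam, (soc_lam x y H). reflexivity. Qed.

Lemma soc_inv x : soc x -> eqv I (inv x) (opp x).
Proof.
  intro H. assert (E : eqv I (mul x (opp x)) one).
  { rewrite (soc_mul x _ H), (addNr B), one_zero. reflexivity. }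
  rewrite <- (mul1r B (inv x)), <- E, (opKg MG). reflexivity.
Qed.

#[global] Instance soc_proper : Proper (eqv I ==> iff) soc.
Proof.
  enough (H : forall x y, eqv I x y -> soc x -> soc y).
  { intros x y E. split; apply H; [exact E | symmetry; exact E]. }
  intros x y E Hx. apply in_soc_modP. split; intro z.
  - rewrite <- E. apply soc_lam, Hx.
  - rewrite <- E. apply soc_comm, Hx.
Qed.

Lemma soc_zero : soc zero.
Proof.
  apply in_soc_modP. split; intro y.
  - rewrite <- one_zero, lam_one. reflexivity.
  - rewrite (add0l B), (add0r B). reflexivity.
Qed.

Lemma soc_of_ideal x : I x -> soc x.
Proof. intro Hx. apply (eqv_zero_l I) in Hx. rewrite <- Hx. exact soc_zero. Qed.

Lemma soc_add x y : soc x -> soc y -> soc (add x y).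
Proof.
  intros Hx Hy. apply in_soc_modP. split; intro z.
  - rewrite <- (soc_mul x y Hx), lam_mul, (soc_lam y z Hy). apply soc_lam, Hx.
  - rewrite <- (addA B), (soc_comm y z Hy), (addA B), (soc_comm x z Hx), <- (addA B).
    reflexivity.
Qed.

Lemma soc_opp x : soc x -> soc (opp x).
Proof.
  intro H. apply in_soc_modP. split; intro y.
  - rewrite <- (soc_inv x H). rewrite <- (lamKV x y) at 2. symmetry. apply soc_lam, H.
  - transitivity (add (add (opp x) (add y x)) (opp x)).
    + rewrite !(addA B), (opgK AG). reflexivity.
    + rewrite <- (soc_comm x y H), (opKg AG). reflexivity.
Qed.

Lemma soc_lam_comm b x y : soc x -> eqv I (add (lam B b x) y) (add y (lam B b x)).
Proof.
  intro H. rewrite <- (lamKV b y).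
  rewrite <- !lam_add, (soc_comm x _ H). reflexivity.
Qed.

Lemma soc_conj b x : soc x -> eqv I (mul (mul b x) (inv b)) (lam B b x).
Proof.
  intro H. rewrite <- (mulA B), (soc_mul x _ H), (brace_comp B), (mulVr B), one_zero,
    (add0r B), mul_lam, <- (addA B), (soc_lam_comm b x _ H), (opKVg AG).
  reflexivity.
Qed.

Lemma soc_lam_closed b x : soc x -> soc (lam B b x).
Proof.
  intro H. apply in_soc_modP. split; intro y.
  - rewrite <- (soc_conj b x H), !lam_mul, (soc_lam x _ H), lamKV. reflexivity.
  - apply soc_lam_comm, H.
Qed.

Lemma soc_subset_ideal (S : subset_of B) :
  (forall x, S x -> soc x) -> (forall x y, eqv I x y -> S x -> S y) ->
  is_add_subgroup B S -> lam_invariant B S -> is_ideal B S.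
Proof.
  intros Ssoc Seqv Sadd Slam. pose proof Sadd as [S0 [SD SN]].
  split; [exact Sadd | split; [split; [| split] | split; [| split]]].
  - rewrite one_zero. exact S0.
  - intros x y Hx Hy. apply (Seqv (add x y)); [symmetry; apply soc_mul, Ssoc |]; auto.
  - intros x Hx. apply (Seqv (opp x)); [symmetry; apply soc_inv, Ssoc |]; auto.
  - intros a x Hx. apply (Seqv x); [| exact Hx].
    rewrite <- (soc_comm x a (Ssoc x Hx)), (opgK AG). reflexivity.
  - intros a x Hx. apply (Seqv (lam B a x)); [symmetry; apply soc_conj, Ssoc |]; auto.
  - exact Slam.
Qed.

Lemma soc_ideal : is_ideal B soc.
Proof.
  apply soc_subset_ideal.
  - auto.
  - intros x y E Hx. rewrite <- E. exact Hx.
  - split; [exact soc_zero | split; [exact soc_add | exact soc_opp]].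
  - intros b x. apply soc_lam_closed.
Qed.

Lemma soc_zpow x k : soc x -> eqv I (zpow B x k) (zmul B x k).
Proof.
  intro H. induction k as [| k IH | k IH] using Z.peano_ind.
  - simpl. rewrite one_zero. reflexivity.
  - rewrite <- Z.add_1_l, zpow_add, zmul_add, zpow1, zmul1, (soc_mul x _ H), IH.
    reflexivity.
  - replace (Z.pred k) with (- (1) + k) by lia.
    rewrite zpow_add, zmul_add, zpow_opp, zmul_opp, zpow1, zmul1, (soc_inv x H),
      (soc_mul (opp x) _ (soc_opp x H)), IH.
    reflexivity.
Qed.

End Socle.

Lemma soc_mono (I J : subset_of B) :
  (forall x, I x -> J x) -> forall x, in_soc_mod B I x -> in_soc_mod B J x.
Proof. intros IJ x [Hlam Hcomm]. split; intro y; apply IJ; auto. Qed.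

Definition supersoluble_factor (I J : subset_of B) : Prop :=
  (add_factor_infinite_cyclic B I J /\ (forall x, J x -> in_soc_mod B I x))
  \/ factor_prime_order B I J.

Inductive ideal_chain : subset_of B -> subset_of B -> Prop :=
  | chain_nil I : is_ideal B I -> ideal_chain I I
  | chain_cons I J K : is_ideal B I -> (forall x, I x -> J x) -> supersoluble_factor I J ->
      ideal_chain J K -> ideal_chain I K.

Lemma ideal_chain_trans I J K : ideal_chain I J -> ideal_chain J K -> ideal_chain I K.
Proof. induction 1; intro; [assumption | econstructor; eauto]. Qed.

Lemma ideal_chain_step (I J : subset_of B) :
  is_ideal B I -> is_ideal B J -> (forall x, I x -> J x) -> supersoluble_factor I J ->
  ideal_chain I J.
Proof. intros HI HJ IJ HIJ. apply (chain_cons I J J); [..| apply chain_nil]; assumption. Qed.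

Lemma ideal_chain_indexed I K : ideal_chain I K ->
  exists m (F : nat -> subset_of B), F O = I /\ F m = K /\
    (forall i, (i <= m)%nat -> is_ideal B (F i)) /\
    (forall i x, (i < m)%nat -> F i x -> F (S i) x) /\
    (forall i, (i < m)%nat -> supersoluble_factor (F i) (F (S i))).
Proof.
  induction 1 as [I HI | I J K HI IJ HIJ _ (m & F & F0 & Fm & Fideal & Fmono & Ffactor)].
  - exists O, (fun _ => I).
    split; [reflexivity | split; [reflexivity | split; [| split]]]; intros; [assumption | lia..].
  - exists (S m), (fun i => match i with O => I | S i => F i end).
    split; [reflexivity | split; [exact Fm | split; [| split]]].
    + intros [| i] Hi; [exact HI | apply Fideal; lia].
    + intros [| i] x Hi Hx; simpl; [rewrite F0; auto | apply Fmono; [lia | exact Hx]].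
    + intros [| i] Hi; simpl; [rewrite F0; exact HIJ | apply Ffactor; lia].
Qed.

Definition span_mod (I : subset_of B) (g : B) : subset_of B :=
  fun x => exists k, eqv I (zmul B g k) x.

Section Span.
Variable I : subset_of B.
Context {HI : is_ideal B I}.
Local Notation soc := (in_soc_mod B I).

Lemma span_mod_gen g : span_mod I g g.
Proof. exists 1. rewrite zmul1. reflexivity. Qed.

Lemma span_mod_of_ideal g x : I x -> span_mod I g x.
Proof. intro Hx. exists 0. apply (eqv_zero_l I), Hx. Qed.

Lemma span_mod_zmul g p x : span_mod I (zmul B g p) x -> span_mod I g x.
Proof. intros [k Hk]. exists (p * k). rewrite zmul_mul. exact Hk. Qed.

Lemma span_mod_soc g x : soc g -> span_mod I g x -> soc x.
Proof.
  intros Hg [k Hk]. pose proof (soc_ideal I). rewrite <- Hk. apply (ideal_zmul soc), Hg.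
Qed.

Lemma span_mod_ideal g :
  soc g -> (forall b, span_mod I g (lam B b g)) -> is_ideal B (span_mod I g).
Proof.
  intros Hg Hlam. apply (soc_subset_ideal I).
  - intro x. apply span_mod_soc, Hg.
  - intros x y E [k Hk]. exists k. rewrite Hk. exact E.
  - split; [apply span_mod_of_ideal, (ideal0 I) | split].
    + intros x y [k Hk] [l Hl]. exists (k + l). rewrite zmul_add, Hk, Hl. reflexivity.
    + intros x [k Hk]. exists (- k). rewrite zmul_opp, Hk. reflexivity.
  - intros b x [k Hk]. destruct (Hlam b) as [s Hs]. exists (s * k).
    rewrite <- Hk, lam_zmul, <- Hs, zmul_mul. reflexivity.
Qed.

Lemma span_mod_zmul_lam g p :
  (forall b, span_mod I g (lam B b g)) ->
  forall b, span_mod I (zmul B g p) (lam B b (zmul B g p)).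
Proof.
  intros Hlam b. destruct (Hlam b) as [s Hs]. exists s.
  rewrite lam_zmul, <- Hs, <- !zmul_mul, Z.mul_comm. reflexivity.
Qed.

Lemma span_mod_infinite_factor g :
  soc g -> (forall k, I (zmul B g k) -> k = 0) -> supersoluble_factor I (span_mod I g).
Proof.
  intros Hg Hinf. left. split.
  - exists g. split; [apply span_mod_gen | split; [| exact Hinf]].
    intros x [k Hk]. exists k. exact Hk.
  - intro x. apply span_mod_soc, Hg.
Qed.

Lemma span_mod_prime_factor g p :
  prime p -> (forall k, I (zmul B g k) -> (p | k)) ->
  factor_prime_order B (span_mod I (zmul B g p)) (span_mod I g).
Proof.
  intros Hp Hdiv. pose proof (prime_ge_2 p Hp).
  exists (Z.to_nat p), (fun j => zmul B g (Z.of_nat j)).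
  split; [rewrite Z2Nat.id by lia; exact Hp | split; [| split]].
  - intros j _. exists (Z.of_nat j). reflexivity.
  - intros j k Hj Hk [t Ht].
    assert (Hjk : (p | - (p * t) + (- Z.of_nat j + Z.of_nat k))).
    { apply Hdiv. rewrite !zmul_add, !zmul_opp, zmul_mul. exact Ht. }
    assert (Z.of_nat j < p) by lia. assert (Z.of_nat k < p) by lia.
    destruct Hjk as [c Hc]. assert (c + t = 0) by nia. lia.
  - intros x [k Hk]. exists (Z.to_nat (k mod p)).
    pose proof (Z.mod_pos_bound k p ltac:(lia)).
    split; [lia |]. exists (k / p).
    rewrite Z2Nat.id by lia. rewrite <- Hk, <- zmul_mul, <- zmul_opp, <- zmul_add.
    replace (- (k mod p) + k) with (p * (k / p)) by (pose proof (Z.div_mod k p); lia).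
    reflexivity.
Qed.

Lemma span_mod_chain d : 0 <= d -> forall g, soc g ->
  (forall b, span_mod I g (lam B b g)) -> (forall k, I (zmul B g k) <-> (d | k)) ->
  ideal_chain I (span_mod I g).
Proof.
  induction d as [d IH] using (well_founded_ind (Z.lt_wf 0)). intros Hd g Hg Hlam Hann.
  pose proof (span_mod_ideal g Hg Hlam).
  destruct (Z.lt_trichotomy d 1) as [Hd1 | [-> | Hd1]].
  - apply ideal_chain_step; auto using span_mod_of_ideal.
    apply span_mod_infinite_factor; [exact Hg |]. intros k Hk.
    apply Z.divide_0_l. replace 0 with d by lia. apply Hann, Hk.
  - replace (span_mod I g) with I; [apply chain_nil, HI |].
    apply subset_ext. intro x. split; [apply span_mod_of_ideal |].
    intros [k Hk]. rewrite <- Hk. apply Hann, Z.divide_1_l.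
  - destruct (Z_prime_divisor d Hd1) as [p [Hp [q Hq]]]. pose proof (prime_ge_2 p Hp).
    assert (Hgp : soc (zmul B g p)) by (pose proof (soc_ideal I); apply (ideal_zmul soc), Hg).
    pose proof (span_mod_zmul_lam g p Hlam) as Hlamp.
    pose proof (span_mod_ideal _ Hgp Hlamp).
    apply (ideal_chain_trans _ (span_mod I (zmul B g p))).
    + apply (IH q); [nia | nia | exact Hgp | exact Hlamp |].
      intro k. rewrite <- zmul_mul, Hann, Hq, (Z.mul_comm p k).
      apply Z.mul_divide_cancel_r. lia.
    + apply ideal_chain_step; [assumption | assumption | intro x; apply span_mod_zmul |].
      right. apply span_mod_prime_factor; [exact Hp |]. intros k Hk.
      apply Hann in Hk. rewrite Hq in Hk.
      apply (Z.divide_trans _ (q * p)); [exists q; reflexivity | exact Hk].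
Qed.

Lemma cyclic_socle_factor_chain (J : subset_of B) (h : B) {HJ : is_ideal B J} :
  (forall x, I x -> J x) -> (forall x, J x -> soc x) -> J h ->
  (forall x, J x -> span_mod I h x) -> ideal_chain I J.
Proof.
  intros IJ Jsoc Jh Jspan.
  assert (EJ : J = span_mod I h).
  { apply subset_ext. intro x. split; [apply Jspan |]. intros [k Hk].
    apply (ideal_eqv_closed I J IJ _ _ Hk), (ideal_zmul J), Jh. }
  destruct (Z_subgroup_multiples (fun k => I (zmul B h k))) as [d [Hd Hann]].
  - apply (ideal0 I).
  - intros k l Hk Hl. rewrite zmul_add. apply (ideal_add I); assumption.
  - intros k Hk. rewrite zmul_opp. apply (ideal_opp I), Hk.
  - rewrite EJ. apply (span_mod_chain d Hd); [apply Jsoc, Jh | | exact Hann].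
    intro b. apply Jspan, (ideal_lam J), Jh.
Qed.

End Span.

Section Series.
Variables I J : subset_of B.
Context {HI : is_ideal B I} {HJ : is_ideal B J}.
Hypothesis IJ : forall x, I x -> J x.
Hypothesis J_soc : forall x, J x -> in_soc_mod B I x.
Variables (m : nat) (N : nat -> subset_of B).
Hypothesis N0 : forall x, N O x <-> x = one.
Hypothesis Nm : forall x, N m x.
Hypothesis N_normal : forall i, (i <= m)%nat -> is_mul_subgroup B (N i) /\ mul_normal B (N i).
Hypothesis N_mono : forall i x, (i < m)%nat -> N i x -> N (S i) x.
Hypothesis N_cyclic : forall i, (i < m)%nat -> exists g, N (S i) g /\
  forall x, N (S i) x -> exists k, N i (mul (inv (zpow B g k)) x).

(* [layer j] is J ∩ N_j I. *)
Definition layer (j : nat) : subset_of B := fun x => J x /\ exists u, N j u /\ eqv I u x.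

Lemma layer_ideal j : (j <= m)%nat -> is_ideal B (layer j).
Proof.
  intro Hj. destruct (N_normal j Hj) as [N_sub N_nrm].
  apply (soc_subset_ideal I).
  - intros x [Jx _]. auto.
  - intros x y E [Jx [u [Nu Hu]]]. split; [exact (ideal_eqv_closed I J IJ x y E Jx) |].
    exists u. split; [exact Nu | rewrite Hu; exact E].
  - split; [| split].
    + split; [apply (ideal0 J) |]. exists one. split; [apply N_sub | rewrite one_zero; reflexivity].
    + intros x y [Jx [u [Nu Hu]]] [Jy [v [Nv Hv]]]. split; [apply (ideal_add J); assumption |].
      exists (mul u v). split; [apply N_sub; assumption |].
      rewrite Hu, Hv. apply (soc_mul I), J_soc, Jx.
    + intros x [Jx [u [Nu Hu]]]. split; [apply (ideal_opp J), Jx |].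
      exists (inv u). split; [apply N_sub, Nu |]. rewrite Hu. apply (soc_inv I), J_soc, Jx.
  - intros b x [Jx [u [Nu Hu]]]. split; [apply (ideal_lam J), Jx |].
    exists (mul (mul b u) (inv b)). split; [apply N_nrm, Nu |].
    rewrite Hu. apply (soc_conj I), J_soc, Jx.
Qed.

Lemma ideal_sub_layer j : (j <= m)%nat -> forall x, I x -> layer j x.
Proof.
  intros Hj x Hx. split; [apply IJ, Hx |]. exists one.
  split; [apply N_normal, Hj | rewrite one_zero; apply (eqv_zero_l I), Hx].
Qed.

Lemma layer_0 : layer O = I.
Proof.
  apply subset_ext. intro x. split; [| apply ideal_sub_layer; lia].
  intros [_ [u [Nu Hu]]]. apply N0 in Nu. subst u.
  rewrite one_zero in Hu. apply (eqv_zero_l I), Hu.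
Qed.

Lemma layer_m : layer m = J.
Proof.
  apply subset_ext. intro x. split; [intros [Jx _]; exact Jx |].
  intro Jx. split; [exact Jx |]. exists x. split; [apply Nm | reflexivity].
Qed.

Lemma layer_mono j : (j < m)%nat -> forall x, layer j x -> layer (S j) x.
Proof. intros Hj x [Jx [u [Nu Hu]]]. split; [exact Jx |]. exists u. auto. Qed.

Lemma layer_cyclic j : (j < m)%nat ->
  exists h, layer (S j) h /\ forall x, layer (S j) x -> span_mod (layer j) h x.
Proof.
  intro Hj. destruct (N_cyclic j Hj) as [g [Ng Ngen]].
  destruct (N_normal j ltac:(lia)) as [N_sub N_nrm].
  destruct (subgroup_of_cyclic_quotient MG (N j) N_sub N_nrm (N (S j)) J g
    (proj1 (N_normal (S j) Hj)) (ideal_mul_subgroup J) (fun x => N_mono j x Hj) Ng Ngen)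
    as [h [Jh [Nh Hgen]]].
  exists h. split; [split; [exact Jh | exists h; split; [exact Nh | reflexivity]] |].
  intros x [Jx [u [Nu Hu]]].
  assert (Ju : J u) by (apply (ideal_eqv_closed I J IJ x u); [symmetry |]; assumption).
  destruct (Hgen u Ju Nu) as [t Nt]. exists t.
  pose proof (layer_ideal j ltac:(lia)).
  transitivity (zpow B h t).
  - apply (eqv_mono I); [apply ideal_sub_layer; lia |].
    symmetry. apply (soc_zpow I), J_soc, Jh.
  - apply (eqv_mul_cong (layer j)). split.
    + apply (ideal_mul J); [apply (ideal_inv J), (ideal_zpow J), Jh | exact Jx].
    + exists (mul (inv (zpow B h t)) u). split; [exact Nt | rewrite Hu; reflexivity].
Qed.

Lemma socle_factor_chain : ideal_chain I J.
Proof.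
  rewrite <- layer_m.
  enough (H : forall j, (j <= m)%nat -> ideal_chain I (layer j)) by (apply H; lia).
  induction j as [| j IH]; intro Hj.
  - rewrite layer_0. apply chain_nil, HI.
  - pose proof (layer_ideal j ltac:(lia)). pose proof (layer_ideal (S j) Hj).
    destruct (layer_cyclic j Hj) as [h [Hh Hgen]].
    apply (ideal_chain_trans _ (layer j)); [apply IH; lia |].
    apply (cyclic_socle_factor_chain (layer j) (layer (S j)) h); auto.
    + apply layer_mono. lia.
    + intros x [Jx _]. apply (soc_mono I); [apply ideal_sub_layer; lia | auto].
Qed.

End Series.

Lemma zero_ideal : is_ideal B (fun x => x = zero).
Proof.
  split; [| split; [| split; [| split]]].
  - split; [reflexivity | split].
    + intros x y -> ->. apply (add0l B).
    + intros x ->. apply (invg1 AG).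
  - split; [apply one_zero | split].
    + intros x y -> ->. rewrite <- one_zero. apply (mul1l B).
    + intros x ->. rewrite <- one_zero. apply (invg1 MG).
  - intros a x ->. rewrite (add0r B). apply (addNr B).
  - intros a x ->. rewrite <- one_zero, (mul1r B). apply (mulVr B).
  - intros b x ->. apply lam_zero.
Qed.

Lemma soc_n_ideal k : is_ideal B (soc_n B k).
Proof. induction k; [exact zero_ideal | apply soc_ideal, IHk]. Qed.

Lemma socle_series_chain k : mul_group_supersoluble B -> ideal_chain (soc_n B O) (soc_n B k).
Proof.
  intros (m & N & N0 & Nm & N_normal & N_mono & N_cyclic).
  induction k as [| k IH]; [apply chain_nil, soc_n_ideal |].
  apply (ideal_chain_trans _ _ _ IH). pose proof (soc_n_ideal k). pose proof (soc_n_ideal (S k)).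
  apply (socle_factor_chain _ _ (soc_of_ideal (soc_n B k)) (fun x H => H) m N); assumption.
Qed.

End Brace.

Theorem theorem3p28 (B : brace) (n : nat) :
  (forall x : B, soc_n B n x) ->
  mul_group_supersoluble B ->
  brace_supersoluble B.
Proof.
  intros Hn HB.
  destruct (ideal_chain_indexed B _ _ (socle_series_chain B n HB))
    as (m & F & F0 & Fn & Fideal & Fmono & Ffactor).
  exists m, F. rewrite F0, Fn. split; [reflexivity | split; [exact Hn | auto]].
Qed.
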